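(* For all integers $n\ge 2$ and $1\le k<n$, the graph $H_B(n,k)$ is connected and its circuit rank (cyclomatic number $|E|-|V|+1$) equals $$\binom{n}{k}\left(\sum_{s=1}^{k}2^{s-1}\binom{k}{s}-1+\sum_{t=1}^{n-k}2^{k+t-1}\binom{n-k}{t}\right)-\sum_{i=1}^n 2^{i-1}\binom{n}{i}+1.$$
   Context: Fix integers $n\ge 2$ and $1\le k<n$ and positive real numbers $x_1<x_2<\dots<x_n$. Let $\mathscr{B}_n=\{\pm x_1,\pm x_2,\dots,\pm x_{n-1},x_n\}$ (so $-x_n\notin\mathscr{B}_n$). Let $\phi(\mathscr{B}_n)$ be the family of all nonempty subsets $S\subseteq\mathscr{B}_n$ whose elements have pairwise distinct absolute values and whose element of largest absolute value is positive. Let $\mathscr{B}_n^+=\{x_1,\dots,x_n\}$, let $V_1$ be the set of all $k$-element subsets of $\mathscr{B}_n^+$, and let $V_2=\phi(\mathscr{B}_n)\setminus V_1$. For $A\in\phi(\mathscr{B}_n)$ put $A^\dagger=\{|a|:a\in A\}$. The bipartite Kneser B type-$k$ graph $H_B(n,k)$ is the simple graph with vertex set $V_1\cup V_2$ in which $X\in V_1$ and $Y\in V_2$ are adjacent if and only if $X\subseteq Y^\dagger$ or $Y^\dagger\subseteq X$, and there are no other edges. *)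

From mathcomp Require Import all_boot all_order all_algebra.
Set Implicit Arguments. Unset Strict Implicit. Unset Printing Implicit Defensive.
Import GRing.Theory Num.Theory.

(* Encoding: the signed element (i, b) : 'I_n * bool stands for
   +x_(i+1) if b = true and -x_(i+1) if b = false.  Since
   0 < x_1 < ... < x_n, the absolute value of (i,b) is x_(i+1), and
   comparing absolute values amounts to comparing indices i. *)
Definition sgnelt (n : nat) := ('I_n * bool)%type.

Definition inBn (n : nat) (a : sgnelt n) : bool := (val a.1 != n.-1) || a.2.

Definition inBnplus (n : nat) (a : sgnelt n) : bool := a.2.

Definition absv (n : nat) (a : sgnelt n) : 'I_n := a.1.

Definition inPhi (n : nat) (S : {set sgnelt n}) : bool :=
  [&& S \subset [set a | inBn a], S != set0,
      [forall a in S, forall b in S, (absv a == absv b) ==> (a == b)] &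
      [forall a in S, [forall b in S, absv b <= absv a] ==> inBnplus a]].

Definition dagger (n : nat) (S : {set sgnelt n}) : {set 'I_n} := [set absv a | a in S].

Definition inV1 (n k : nat) (S : {set sgnelt n}) : bool :=
  (S \subset [set a | inBnplus a]) && (#|S| == k).

Definition inV2 (n k : nat) (S : {set sgnelt n}) : bool :=
  inPhi S && ~~ inV1 k S.

Definition HB_vert (n k : nat) : {set {set sgnelt n}} :=
  [set S | inV1 k S || inV2 k S].

(* adjacency of H_B(n,k): X in V1, Y in V2 with X ⊆ Y^† or Y^† ⊆ X
   (X viewed as a set of positive numbers, i.e. via X^† = X) *)
Definition HB_adj1 (n k : nat) (X Y : {set sgnelt n}) : bool :=
  [&& inV1 k X, inV2 k Y &
      (dagger X \subset dagger Y) || (dagger Y \subset dagger X)].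

Definition HB_adj (n k : nat) : rel {set sgnelt n} :=
  fun X Y => HB_adj1 k X Y || HB_adj1 k Y X.

Definition HB_edges (n k : nat) : {set {set {set sgnelt n}}} :=
  [set e | [exists X, exists Y, [&& X \in HB_vert n k, Y \in HB_vert n k,
            HB_adj k X Y & e == [set X; Y]]]].

Definition graph_connected (T : finType) (V : {set T}) (e : rel T) : Prop :=
  forall u v, u \in V -> v \in V ->
    connect [rel x y | [&& x \in V, y \in V & e x y]] u v.

Definition HB_circuit_rank (n k : nat) : int :=
  (#|HB_edges n k|%:Z - #|HB_vert n k|%:Z + 1)%R.

From mathcomp Require Import all_boot all_order all_algebra.
From mathcomp Require Import zify ring.
Import GRing.Theory Num.Theory.
Set Implicit Arguments. Unset Strict Implicit. Unset Printing Implicit Defensive.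

(* Every set in V1 already lies in phi(B_n), so the vertex set is phi(B_n);
   a set in phi(B_n) with dagger A is a choice of signs on A with the largest
   index positive, so there are 2^(|A|-1) of them.  A vertex X in V1 is
   adjacent to exactly the Y in phi(B_n) whose dagger is comparable with
   X^dagger, except X itself (the other such sets in V1 would have the same
   dagger as X); splitting into subsets and proper supersets of X^dagger gives
   its degree, and summing over V1 counts every edge once.  The graph is
   connected because every vertex is at distance at most two from B_n^+,
   which lies in V2 since k < n. *)

Definition subset_comparable (T : finType) (A B : {set T}) : bool :=
  (A \subset B) || (B \subset A).

Lemma sum_subset_card (T : finType) (B : {set T}) (h : nat -> nat) :
  \sum_(A : {set T} | A \subset B) h #|A| = \sum_(s < #|B|.+1) 'C(#|B|, s) * h s.
Proof.
transitivity (\sum_(A : {set T} | A \subset B) \sum_(s < #|B|.+1) (#|A| == s) * h s).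
  apply: eq_bigr => A sAB.
  have ltAB : #|A| < #|B|.+1 by rewrite ltnS subset_leq_card.
  rewrite (bigD1 (Ordinal ltAB)) //= eqxx mul1n big1 ?addn0 // => s ne_s.
  by case: eqP => [E|_]; [case/eqP: ne_s; apply: val_inj | rewrite mul0n].
rewrite exchange_big; apply: eq_bigr => s _.
rewrite (eq_bigr (fun A : {set T} => if #|A| == s then h s else 0)); last first.
  by move=> A _; case: (_ == _); rewrite ?mul1n ?mul0n.
by rewrite -big_mkcondr /= sum_nat_const -(cards_draws B s) cardsE.
Qed.

Lemma sum_proper_supset (T : finType) (D : {set T}) (g : nat -> nat) :
  \sum_(A : {set T} | D \proper A) g #|A| =
  \sum_(C : {set T} | C \subset ~: D) (if C != set0 then g (#|D| + #|C|) else 0).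
Proof.
rewrite -big_mkcondr /=.
rewrite (reindex_onto (fun C => C :|: D) (fun A => A :\: D)); last first.
  by move=> A /proper_sub sDA; rewrite setUC setDE setUIr setUCr setIT (setUidPr sDA).
apply: eq_big => C.
  apply/andP/andP => [[DC /eqP E] | [sCD nzC]].
    rewrite -E; split; first by rewrite subsetDr.
    apply: contraL DC => /eqP C0.
    by rewrite properE negb_and negbK; apply/orP; right; rewrite -setD_eq0 C0.
  have disjCD : [disjoint C & D] by rewrite disjoints_subset.
  split; last by rewrite setDUl setDv setU0; apply/eqP/setDidPl.
  rewrite properUr //; apply: contra nzC => sCD'.
  by rewrite -subset0 -(disjoint_setI0 disjCD) subsetI subxx.
case/andP => _ /eqP E.
suff disjCD : C :&: D = set0 by rewrite cardsU disjCD cards0 subn0 addnC.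
by rewrite -E setDE -setIA [~: D :&: D]setIC setICr setI0.
Qed.

Lemma sum_comparable_card (T : finType) (D : {set T}) (g : nat -> nat) :
  \sum_(A : {set T} | subset_comparable D A) g #|A| =
  \sum_(s < #|D|.+1) 'C(#|D|, s) * g s +
  \sum_(t < (#|T| - #|D|).+1) 'C(#|T| - #|D|, t) * (if (t : nat) != 0 then g (#|D| + t) else 0).
Proof.
rewrite (bigID (fun A : {set T} => A \subset D)) /=; congr (_ + _).
  rewrite -sum_subset_card; apply: eq_bigl => A.
  by rewrite /subset_comparable andb_idl // orbC => ->.
rewrite (eq_bigl (fun A : {set T} => D \proper A)) => [|A]; last first.
  by rewrite /subset_comparable properE; case: (A \subset D); rewrite ?orbF ?andbF ?andbT.
have cDc : #|~: D| = #|T| - #|D| by have := cardsC D; lia.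
rewrite sum_proper_supset -cDc -(sum_subset_card _ (fun t => if t != 0 then g (#|D| + t) else 0)).
by apply: eq_bigr => C _; rewrite cards_eq0.
Qed.

Lemma subset_comparable_card_eq (T : finType) (A B : {set T}) :
  #|A| = #|B| -> subset_comparable A B -> A = B.
Proof. by move=> cAB /orP [] sAB; [|symmetry]; apply/eqP; rewrite eqEcard sAB cAB leqnn. Qed.

Lemma exists_card_comparable (T : finType) (D : {set T}) k : k <= #|T| ->
  exists2 A : {set T}, #|A| = k & subset_comparable A D.
Proof.
move=> le_kT; have [le_kD | lt_Dk] := leqP k #|D|.
  have : 0 < #|[set A : {set T} | A \subset D & #|A| == k]| by rewrite cards_draws bin_gt0.
  case/card_gt0P => A; rewrite inE => /andP [sAD /eqP cA].
  by exists A; rewrite /subset_comparable ?sAD.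
have cDc : #|~: D| = #|T| - #|D| by have := cardsC D; lia.
have : 0 < #|[set B : {set T} | B \subset ~: D & #|B| == k - #|D|]|.
  by rewrite cards_draws bin_gt0 cDc; lia.
case/card_gt0P => B; rewrite inE => /andP [sBDc /eqP cB].
exists (D :|: B); last by rewrite /subset_comparable subsetUl orbT.
have /disjoint_setI0 DB0 : [disjoint D & B] by rewrite disjoint_sym disjoints_subset.
by rewrite cardsU DB0 cB cards0 subn0; lia.
Qed.

Section PhiFibre.

Variables (n : nat) (A : {set 'I_n}) (m : 'I_n).
Hypotheses (mA : m \in A) (m_max : forall i, i \in A -> i <= m).

(* A set in phi with dagger A is a choice of sign for each index of A, the
   sign of the maximal index [m] being forced to be positive. *)
Let sign_patterns :=
  pfamily false A (fun i : 'I_n => if i == m then pred1 true else predT).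

Let signed_set (f : {ffun 'I_n -> bool}) : {set sgnelt n} := [set (i, f i) | i in A].

Lemma card_sign_patterns : #|sign_patterns| = 2 ^ (#|A| - 1).
Proof.
rewrite card_pfamily foldrE big_map big_enum /= (bigD1 m) //= eqxx.
rewrite (eq_bigr (fun _ => 2)); last first.
  by move=> i /andP [_ /negbTE ->]; rewrite -card_bool; apply: eq_card.
rewrite prod_nat_const (cardD1 m A) mA add1n subn1 /=.
rewrite (_ : #|pred1 true| = 1) ?mul1n ?card1 //.
by congr (2 ^ _); apply: eq_card => i; rewrite !inE andbC.
Qed.

Lemma signed_set_inj : {in sign_patterns &, injective signed_set}.
Proof.
move=> f1 f2 /pfamilyP [/supportP supp1 _] /pfamilyP [/supportP supp2 _] E.
apply/ffunP => i; have [iA | iA] := boolP (i \in A); last by rewrite supp1 ?supp2.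
have : (i, f1 i) \in signed_set f2 by rewrite -E; apply/imsetP; exists i.
by case/imsetP => j _ [-> ->].
Qed.

Lemma signed_set_phi f : f \in sign_patterns ->
  inPhi (signed_set f) /\ dagger (signed_set f) = A.
Proof.
move/pfamilyP => [_ f_sign].
have fm : f m by have := f_sign m mA; rewrite eqxx inE => /eqP ->.
have m_eq i : i \in A -> m <= i -> i = m.
  by move=> iA le_mi; apply/val_inj/eqP; rewrite eqn_leq m_max.
have mf : (m, f m) \in signed_set f by apply/imsetP; exists m.
split; last first.
  apply/setP => i; apply/imsetP/idP => [[a /imsetP [j jA ->] ->] // | iA].
  by exists (i, f i) => //; apply/imsetP; exists i.
apply/and4P; split.
- apply/subsetP => a /imsetP [j jA ->]; rewrite inE /inBn /=.
  case: eqP => //= j_last; rewrite (m_eq j jA) //.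
  by have := ltn_ord m; rewrite j_last; lia.
- by apply/set0Pn; exists (m, f m).
- apply/forallP => a; apply/implyP => /imsetP [i iA ->].
  apply/forallP => b; apply/implyP => /imsetP [j jA ->].
  by apply/implyP; rewrite /absv /= => /eqP ->.
- apply/forallP => a; apply/implyP => /imsetP [i iA ->].
  apply/implyP => /forallP /(_ (m, f m)); rewrite mf /= => le_mi.
  by rewrite /inBnplus /= (m_eq i iA le_mi).
Qed.

Lemma phi_signed_set S : inPhi S -> dagger S = A ->
  exists2 f, f \in sign_patterns & S = signed_set f.
Proof.
case/and4P => _ _ /forallP S_abs_inj /forallP S_max_pos dS.
have abs_inj a b : a \in S -> b \in S -> a.1 = b.1 -> a = b.
  move=> aS bS E; have /forallP/(_ b) := implyP (S_abs_inj a) aS.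
  by rewrite bS /absv E eqxx => /eqP.
have inA a : a \in S -> a.1 \in A by move=> aS; rewrite -dS; apply/imsetP; exists a.
have inS i : i \in A -> exists2 b, b \in S & b.1 = i.
  by rewrite -dS => /imsetP [b bS ->]; exists b.
have signS (i : 'I_n) b : (i, b) \in S -> b = ((i, true) \in S).
  by case: b => // iS; apply/esym/negbTE/negP => /(abs_inj _ _ iS) /(_ erefl).
exists [ffun i => (i, true) \in S].
  apply/pfamilyP; split.
    apply/supportP => i iA; rewrite ffunE; apply/negbTE/negP => iS.
    by move: iA; rewrite (inA _ iS).
  move=> i iA; case: eqP => [-> | _] //; rewrite inE ffunE.
  have [[j b] mbS /= jm] := inS m mA; rewrite jm in mbS.
  suff b_pos : b by rewrite -b_pos mbS.
  apply: (implyP (implyP (S_max_pos _) mbS)).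
  by apply/forallP => c; apply/implyP => cS; rewrite /absv /= m_max ?inA.
apply/setP => [[i b]]; apply/idP/imsetP => [iS | [j jA [-> ->]]].
  by exists i; [apply: (inA _ iS) | rewrite ffunE -(signS _ _ iS)].
have [[j' b'] bS /= j'j] := inS j jA; rewrite j'j in bS.
by rewrite ffunE -(signS _ _ bS).
Qed.

Lemma card_phi_fibre :
  #|[set S : {set sgnelt n} | inPhi S & dagger S == A]| = 2 ^ (#|A| - 1).
Proof.
rewrite -card_sign_patterns -(card_in_imset signed_set_inj).
apply: eq_card => S; rewrite inE; apply/andP/imsetP => [[phiS /eqP dS] | [f fF ->]].
  by have [f fF ->] := phi_signed_set phiS dS; exists f.
by have [phiS ->] := signed_set_phi fF.
Qed.

End PhiFibre.

(* Size of the fibre of dagger over an [i]-element set, by card_phi_fibre;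
   the fibre over the empty set is empty. *)
Definition sign_weight (i : nat) : nat := if i != 0 then 2 ^ (i - 1) else 0.

Lemma card_phi_dagger n (P : pred {set 'I_n}) :
  #|[set S : {set sgnelt n} | inPhi S & P (dagger S)]| = \sum_(A | P A) sign_weight #|A|.
Proof.
rewrite -sum1_card (partition_big (@dagger n) P) => [|S]; last by rewrite inE => /andP [].
apply: eq_bigr => A PA.
rewrite (eq_bigl (fun S => S \in [set S | inPhi S & dagger S == A])) => [|S]; last first.
  by rewrite !inE; case: eqP => [->|]; rewrite ?PA ?andbT ?andbF.
rewrite sum1_card /sign_weight; have [/eqP A0 | /set0Pn [i iA]] := boolP (A == set0).
  rewrite A0 cards0 /=; apply: eq_card0 => S; rewrite inE.
  apply/negP => /andP [/and4P [_ /set0Pn [a aS] _ _] /eqP dS0].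
  have : absv a \in dagger S by apply/imsetP; exists a.
  by rewrite dS0 inE.
have [m mA m_max] := arg_maxnP (fun i : 'I_n => val i) iA.
by rewrite (card_phi_fibre mA m_max) cards_eq0; case: eqP => // A0; rewrite A0 inE in iA.
Qed.

Section PositiveSets.

Variable n : nat.

Definition pos_set : {set sgnelt n} := [set a | inBnplus a].

Definition pos_lift (A : {set 'I_n}) : {set sgnelt n} := [set (i, true) | i in A].

Lemma pos_lift_sub A : pos_lift A \subset pos_set.
Proof. by apply/subsetP => _ /imsetP [i _ ->]; rewrite inE. Qed.

Lemma dagger_pos_lift A : dagger (pos_lift A) = A.
Proof. by rewrite /dagger -imset_comp imset_id. Qed.

Lemma pos_liftK (X : {set sgnelt n}) : X \subset pos_set -> pos_lift (dagger X) = X.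
Proof.
move/subsetP => X_pos; apply/setP => [[i b]]; apply/imsetP/idP.
  case=> _ /imsetP [[j c] jX ->] [-> ->].
  by have := X_pos _ jX; rewrite inE /inBnplus /= => c_pos; rewrite c_pos in jX.
move=> iX; exists i; first by apply/imsetP; exists (i, b).
by have := X_pos _ iX; rewrite inE /inBnplus /= => ->.
Qed.

Lemma card_pos_lift A : #|pos_lift A| = #|A|.
Proof. by rewrite card_imset // => i j []. Qed.

Lemma card_dagger_pos (X : {set sgnelt n}) : X \subset pos_set -> #|dagger X| = #|X|.
Proof. by move=> X_pos; rewrite -card_pos_lift pos_liftK. Qed.

Lemma dagger_pos_inj (X Y : {set sgnelt n}) : X \subset pos_set -> Y \subset pos_set ->
  dagger X = dagger Y -> X = Y.
Proof. by move=> X_pos Y_pos dXY; rewrite -(pos_liftK X_pos) dXY pos_liftK. Qed.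

Lemma dagger_pos_set : dagger pos_set = setT.
Proof. by apply/setP => i; rewrite inE; apply/imsetP; exists (i, true); rewrite ?inE. Qed.

Lemma card_pos_set : #|pos_set| = n.
Proof. by rewrite -card_dagger_pos // dagger_pos_set cardsT card_ord. Qed.

Lemma pos_inPhi (X : {set sgnelt n}) : X \subset pos_set -> X != set0 -> inPhi X.
Proof.
move=> X_pos X0; have /subsetP X_pos' := X_pos.
apply/and4P; split=> //.
- by apply/subsetP => a /X_pos'; rewrite !inE /inBn /inBnplus => ->; rewrite orbT.
- apply/forallP => a; apply/implyP => aX; apply/forallP => b; apply/implyP => bX.
  apply/implyP => /eqP dab; apply/eqP/set1_inj.
  apply: dagger_pos_inj; rewrite ?sub1set ?X_pos' //.
  by rewrite /dagger !imset_set1 dab.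
- apply/forallP => a; apply/implyP => /X_pos'; rewrite inE => ->.
  by rewrite implybT.
Qed.

End PositiveSets.

Lemma sum_binomial_sign_weight N :
  \sum_(s < N.+1) 'C(N, s) * sign_weight s = \sum_(1 <= s < N.+1) 2 ^ (s - 1) * 'C(N, s).
Proof.
rewrite -(big_mkord predT (fun s => 'C(N, s) * sign_weight s)) (@big_ltn _ _ _ 0) //= muln0 add0n.
by apply: eq_big_nat => s /andP [s_gt0 _]; rewrite /sign_weight -lt0n s_gt0 mulnC.
Qed.

Lemma sum_binomial_sign_weight_shift N k :
  \sum_(t < N.+1) 'C(N, t) * (if (t : nat) != 0 then sign_weight (k + t) else 0) =
  \sum_(1 <= t < N.+1) 2 ^ (k + t - 1) * 'C(N, t).
Proof.
rewrite -(big_mkord predT (fun t => 'C(N, t) * (if t != 0 then sign_weight (k + t) else 0))).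
rewrite (@big_ltn _ _ _ 0) //= muln0 add0n; apply: eq_big_nat => t /andP [t_gt0 _].
by case: t t_gt0 => // t _; rewrite /sign_weight addnS /= mulnC.
Qed.

Section HBGraph.

Variables n k : nat.

Lemma card_V1 : #|[set X : {set sgnelt n} | inV1 k X]| = 'C(n, k).
Proof. by rewrite -[in RHS](card_pos_set n) -cards_draws; apply: eq_card => X; rewrite !inE. Qed.

Lemma HB_adj1_V1 (X Y : {set sgnelt n}) : HB_adj1 k X Y -> inV1 k X && ~~ inV1 k Y.
Proof. by case/and3P => -> /andP [_ ->]. Qed.

Let edge_of (p : {set sgnelt n} * {set sgnelt n}) := [set p.1; p.2].

Lemma HB_edges_of_adj1 :
  HB_edges n k = edge_of @: [set p | HB_adj1 k p.1 p.2].
Proof.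
apply/setP => e; rewrite inE; apply/existsP/imsetP.
  case=> X /existsP [Y /and4P [_ _ /orP [adjXY | adjYX] /eqP ->]].
    by exists (X, Y); rewrite ?inE.
  by exists (Y, X); rewrite ?inE // /edge_of setUC.
case=> [[X Y]]; rewrite inE /= => adjXY ->; exists X; apply/existsP; exists Y.
have /and3P [V1X V2Y _] := adjXY.
by rewrite !inE V1X V2Y orbT /HB_adj adjXY eqxx.
Qed.

Lemma edge_of_adj1_inj : {in [set p | HB_adj1 k p.1 p.2] &, injective edge_of}.
Proof.
move=> [X1 Y1] [X2 Y2]; rewrite !inE /= => /HB_adj1_V1 /andP [V1X1 V1Y1].
move=> /HB_adj1_V1 /andP [V1X2 V1Y2] E.
have : X1 \in edge_of (X2, Y2) by rewrite -E !inE eqxx.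
have : Y1 \in edge_of (X2, Y2) by rewrite -E !inE eqxx orbT.
rewrite !inE /= => /orP [/eqP Y1X2 | /eqP ->]; first by rewrite -Y1X2 (negbTE V1Y1) in V1X2.
case/orP => /eqP X12; first by rewrite X12.
by rewrite -X12 V1X1 in V1Y2.
Qed.

Lemma card_HB_edges :
  #|HB_edges n k| = \sum_(X : {set sgnelt n} | inV1 k X) #|[set Y | HB_adj1 k X Y]|.
Proof.
rewrite HB_edges_of_adj1 card_in_imset; last exact: edge_of_adj1_inj.
rewrite -sum1_card (eq_bigr (fun X => \sum_(Y | HB_adj1 k X Y) 1)) => [|X _]; last first.
  by rewrite -sum1_card; apply: eq_bigl => Y; rewrite inE.
rewrite pair_big_dep; apply: eq_bigl => [[X Y]]; rewrite inE /=.
by case adjXY: (HB_adj1 k X Y); rewrite ?andbF // andbT; case/and3P: adjXY.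
Qed.

Hypothesis k_gt0 : 0 < k.

Lemma inV1_inPhi (X : {set sgnelt n}) : inV1 k X -> inPhi X.
Proof. by case/andP => X_pos /eqP cX; apply: pos_inPhi; rewrite // -card_gt0 cX. Qed.

Lemma HB_vertE : HB_vert n k = [set S | inPhi S].
Proof.
apply/setP => S; rewrite !inE /inV2.
by have [/inV1_inPhi -> | _] := boolP (inV1 k S); rewrite ?andbT.
Qed.

Lemma card_HB_nbhd (X : {set sgnelt n}) : inV1 k X ->
  #|[set Y | HB_adj1 k X Y]|.+1 =
  #|[set Y | inPhi Y & subset_comparable (dagger X) (dagger Y)]|.
Proof.
move=> V1X; have /andP [X_pos /eqP cX] := V1X.
suff -> : [set Y | inPhi Y & subset_comparable (dagger X) (dagger Y)] =
          X |: [set Y | HB_adj1 k X Y].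
  by rewrite cardsU1 !inE /HB_adj1 /inV2 V1X andbF.
apply/setP => Y; rewrite !inE /HB_adj1 V1X /inV2 -/(subset_comparable _ _).
have [-> | neqYX] := eqVneq Y X; first by rewrite inV1_inPhi // /subset_comparable subxx.
case: (inPhi Y) => //=; case V1Y: (inV1 k Y) => //=.
have /andP [Y_pos /eqP cY] := V1Y.
apply/negbTE; apply: contra neqYX => cmp; apply/eqP/esym/dagger_pos_inj => //.
by apply: subset_comparable_card_eq cmp; rewrite !card_dagger_pos // cX cY.
Qed.

Lemma card_HB_vert : #|HB_vert n k| = \sum_(1 <= i < n.+1) 2 ^ (i - 1) * 'C(n, i).
Proof.
rewrite HB_vertE -sum_binomial_sign_weight -[in RHS](card_ord n) -cardsT -sum_subset_card.
rewrite (eq_bigl predT) => [|A]; last by rewrite subsetT.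
by rewrite -card_phi_dagger; apply: eq_card => S; rewrite !inE andbT.
Qed.

Lemma card_HB_edges_addV1 :
  #|HB_edges n k| + 'C(n, k) =
  'C(n, k) * (\sum_(1 <= s < k.+1) 2 ^ (s - 1) * 'C(k, s) +
              \sum_(1 <= t < (n - k).+1) 2 ^ (k + t - 1) * 'C(n - k, t)).
Proof.
rewrite card_HB_edges (eq_bigl [in [set X | inV1 k X]]) => [|X]; last by rewrite inE.
rewrite -card_V1 -sum1_card -big_split big_distrl /=.
apply: eq_bigr => X; rewrite inE mul1n addn1 => V1X; have /andP [X_pos /eqP cX] := V1X.
rewrite card_HB_nbhd // card_phi_dagger sum_comparable_card.
by rewrite card_dagger_pos // cX card_ord sum_binomial_sign_weight sum_binomial_sign_weight_shift.
Qed.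

Hypothesis k_lt_n : k < n.

Lemma pos_set_V2 : inV2 k (pos_set n).
Proof.
rewrite /inV2 /inV1 card_pos_set subxx (gtn_eqF k_lt_n) andbT pos_inPhi //.
by rewrite -card_gt0 card_pos_set (leq_ltn_trans _ k_lt_n).
Qed.

Lemma V1_adj1_pos_set (X : {set sgnelt n}) : inV1 k X -> HB_adj1 k X (pos_set n).
Proof. by move=> V1X; rewrite /HB_adj1 V1X pos_set_V2 dagger_pos_set subsetT. Qed.

Lemma V2_adj1_V1 (Y : {set sgnelt n}) : inV2 k Y -> exists2 X, inV1 k X & HB_adj1 k X Y.
Proof.
move=> V2Y; have [|A cA cmp] := @exists_card_comparable _ (dagger Y) k.
  by rewrite card_ord ltnW.
have V1X : inV1 k (pos_lift A) by rewrite /inV1 pos_lift_sub card_pos_lift cA eqxx.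
by exists (pos_lift A); rewrite // /HB_adj1 V1X V2Y dagger_pos_lift.
Qed.

Lemma HB_connected : graph_connected (HB_vert n k) (@HB_adj n k).
Proof.
move=> u v uV vV; set e := [rel x y | _].
have e_sym : symmetric e.
  by move=> x y; rewrite /e /= /HB_adj andbCA orbC.
have adj1_e X Y : HB_adj1 k X Y -> e X Y.
  move=> adjXY; have /and3P [V1X V2Y _] := adjXY.
  by rewrite /e /= !inE V1X V2Y orbT /HB_adj adjXY.
have to_hub x : x \in HB_vert n k -> connect e x (pos_set n).
  rewrite inE => /orP [V1x | V2x]; first exact/connect1/adj1_e/V1_adj1_pos_set.
  have [X V1X adjXx] := V2_adj1_V1 V2x.
  apply: (@connect_trans _ _ X); apply: connect1; last exact/adj1_e/V1_adj1_pos_set.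
  by rewrite e_sym; exact: adj1_e.
by apply: connect_trans (to_hub u uV) _; rewrite (sym_connect_sym e_sym) to_hub.
Qed.

End HBGraph.

Theorem mainTheorem9 (n k : nat) (hn : 2 <= n) (hk1 : 1 <= k) (hkn : k < n) :
  graph_connected (HB_vert n k) (@HB_adj n k) /\
  HB_circuit_rank n k =
  ('C(n, k)%:Z *
     (\sum_(1 <= s < k.+1) (2 ^ (s - 1) * 'C(k, s))%:Z - 1
      + \sum_(1 <= t < (n - k).+1) (2 ^ (k + t - 1) * 'C(n - k, t))%:Z)
   - \sum_(1 <= i < n.+1) (2 ^ (i - 1) * 'C(n, i))%:Z + 1)%R.
Proof.
split; first exact: HB_connected.
have card_edges := card_HB_edges_addV1 n hk1.
rewrite /HB_circuit_rank card_HB_vert // -!(big_morph Posz PoszD (erefl (Posz 0))).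
have -> : Posz #|HB_edges n k| = (Posz (#|HB_edges n k| + 'C(n, k)) - Posz 'C(n, k))%R.
  by rewrite PoszD addrK.
by rewrite card_edges PoszM PoszD; ring.
Qed.
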